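(* Let $(M,\varphi,\xi,\eta)$ be an anti-normal almost contact manifold. Then: (i) $d\eta(\xi,\cdot)=0$, equivalently $\mathcal{L}_\xi\eta=0$; (ii) $\mathcal{L}_\xi d\eta=0$; (iii) $\mathcal{L}_\xi\varphi=0$; (iv) $d\eta(\varphi X,\varphi Y)=-d\eta(X,Y)$ for all $X,Y\in\mathfrak{X}(M)$, equivalently $d\eta(\varphi X,Y)=d\eta(X,\varphi Y)$ for all $X,Y\in\mathfrak{X}(M)$.
   Context: An almost contact manifold $(M,\varphi,\xi,\eta)$ is an odd-dimensional smooth manifold with a $(1,1)$-tensor field $\varphi$, a vector field $\xi$ and a $1$-form $\eta$ such that $\varphi^2=-I+\eta\otimes\xi$ and $\eta(\xi)=1$ (hence $\varphi\xi=0$, $\eta\circ\varphi=0$). Convention: $d\eta(X,Y)=X(\eta(Y))-Y(\eta(X))-\eta([X,Y])$. The tensor $N_\varphi$ is $N_\varphi(X,Y)=[\varphi X,\varphi Y]+\varphi^2[X,Y]-\varphi[X,\varphi Y]-\varphi[\varphi X,Y]+d\eta(X,Y)\xi$. The structure is called anti-normal if $N_\varphi(X,Y)=2\,d\eta(X,Y)\xi$ for all vector fields $X,Y$. *)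

(* Algebraic model of a smooth manifold M:
   A = the commutative R-algebra of smooth functions C^oo(M),
   vector fields = R-linear derivations of A (for a smooth manifold these are
   exactly the smooth vector fields), tensor fields = A-linear maps. *)
From HB Require Import structures.
From mathcomp Require Import all_boot all_order all_algebra.
Set Implicit Arguments. Unset Strict Implicit. Unset Printing Implicit Defensive.
Import Order.TTheory GRing.Theory Num.Theory.
Local Open Scope ring_scope.

Section AlmostContact.
Variables (R : comNzRingType) (A : comAlgType R).

Definition is_vf (X : A -> A) : Prop :=
  (forall (c : R) (a b : A), X (c *: a + b) = c *: X a + X b) /\
  (forall a b : A, X (a * b) = a * X b + X a * b).

Definition vadd (X Y : A -> A) : A -> A := fun a => X a + Y a.
Definition vsub (X Y : A -> A) : A -> A := fun a => X a - Y a.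
Definition vscale (f : A) (X : A -> A) : A -> A := fun a => f * X a.
Definition vzero : A -> A := fun _ => 0.
Definition vbr (X Y : A -> A) : A -> A := fun a => X (Y a) - Y (X a).

Record almost_contact (phi : (A -> A) -> (A -> A)) (xi : A -> A)
    (eta : (A -> A) -> A) : Prop := {
  ac_phi_vf : forall X, is_vf X -> is_vf (phi X);
  ac_phi_lin : forall (f : A) X Y, is_vf X -> is_vf Y ->
      phi (vadd (vscale f X) Y) = vadd (vscale f (phi X)) (phi Y);
  ac_eta_lin : forall (f : A) X Y, is_vf X -> is_vf Y ->
      eta (vadd (vscale f X) Y) = f * eta X + eta Y;
  ac_xi_vf : is_vf xi;
  ac_phi2 : forall X, is_vf X ->
      phi (phi X) = vadd (vscale (-1) X) (vscale (eta X) xi);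
  ac_eta_xi : eta xi = 1;
  ac_phi_xi : phi xi = vzero;
  ac_eta_phi : forall X, is_vf X -> eta (phi X) = 0 }.

Definition deta (eta : (A -> A) -> A) (X Y : A -> A) : A :=
  X (eta Y) - Y (eta X) - eta (vbr X Y).

Definition Nphi (phi : (A -> A) -> (A -> A)) (xi : A -> A)
    (eta : (A -> A) -> A) (X Y : A -> A) : A -> A :=
  vadd (vsub (vsub (vadd (vbr (phi X) (phi Y)) (phi (phi (vbr X Y))))
                   (phi (vbr X (phi Y))))
             (phi (vbr (phi X) Y)))
       (vscale (deta eta X Y) xi).

Definition anti_normal phi xi eta : Prop :=
  almost_contact phi xi eta /\
  forall X Y, is_vf X -> is_vf Y ->
    Nphi phi xi eta X Y = vscale (2%:R * deta eta X Y) xi.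

Definition Lie_eta (xi : A -> A) (eta : (A -> A) -> A) (X : A -> A) : A :=
  xi (eta X) - eta (vbr xi X).
Definition Lie_deta (xi : A -> A) (eta : (A -> A) -> A) (X Y : A -> A) : A :=
  xi (deta eta X Y) - deta eta (vbr xi X) Y - deta eta X (vbr xi Y).
Definition Lie_phi (phi : (A -> A) -> (A -> A)) (xi : A -> A) (X : A -> A)
    : A -> A :=
  vsub (vbr xi (phi X)) (phi (vbr xi X)).

End AlmostContact.

(* Applying eta to the anti-normality identity N(X,Y) = 2 deta(X,Y) xi gives
   eta [phi X, phi Y] = deta(X,Y), hence deta(phi X, phi Y) = - deta(X,Y); taking
   X = xi (where phi xi = 0) yields deta(xi, .) = 0, which is L_xi eta = 0.
   Cartan's formula L_xi deta = d(L_xi eta) then gives (ii).  For (iii),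
   N(xi,Y) = 0 reads phi [xi, phi Y] = phi^2 [xi, Y]; applying phi once more and
   using phi^3 = - phi and phi^2 = -1 on ker eta yields [xi, phi Y] = phi [xi, Y]. *)
From mathcomp Require Import all_boot all_order all_algebra.
From mathcomp Require Import ring.
From Stdlib Require Import FunctionalExtensionality.
Set Implicit Arguments.
Import GRing.Theory.
Local Open Scope ring_scope.

Section VectorFields.
Context {R : comNzRingType} {A : comAlgType R}.
Implicit Types (X Y Z U V : A -> A) (f g : A).

Section Derivation.
Context {X : A -> A}.
Hypothesis hX : is_vf X.

Lemma vfD a b : X (a + b) = X a + X b.
Proof. by case: hX => lin _; have := lin 1 a b; rewrite !scale1r. Qed.

Lemma vf0 : X 0 = 0.
Proof. by apply: (addrI (X 0)); rewrite -vfD !addr0. Qed.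

Lemma vfN a : X (- a) = - X a.
Proof. by apply/eqP; rewrite -addr_eq0 -vfD addNr vf0. Qed.

Lemma vfB a b : X (a - b) = X a - X b.
Proof. by rewrite vfD vfN. Qed.

Lemma vfZ (c : R) a : X (c *: a) = c *: X a.
Proof. by case: hX => lin _; have := lin c a 0; rewrite !addr0 vf0 addr0. Qed.

Lemma vfM a b : X (a * b) = a * X b + X a * b.
Proof. by case: hX. Qed.

Lemma vf1 : X 1 = 0.
Proof.
have h := vfM 1 1; rewrite !mul1r mulr1 in h.
by apply: (addrI (X 1)); rewrite addr0 -h.
Qed.

End Derivation.

Lemma is_vf_vzero : is_vf (@vzero R A).
Proof. by split=> *; rewrite /vzero ?scaler0 ?mulr0 ?mul0r ?addr0. Qed.

Lemma is_vf_vadd X Y : is_vf X -> is_vf Y -> is_vf (vadd X Y).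
Proof.
move=> hX hY; split=> [c a b|a b]; rewrite /vadd.
  by rewrite (vfD hX) (vfD hY) (vfZ hX) (vfZ hY) scalerDr addrACA.
by rewrite (vfM hX) (vfM hY); ring.
Qed.

Lemma is_vf_vsub X Y : is_vf X -> is_vf Y -> is_vf (vsub X Y).
Proof.
move=> hX hY; split=> [c a b|a b]; rewrite /vsub.
  by rewrite (vfD hX) (vfD hY) (vfZ hX) (vfZ hY) scalerBr opprD addrACA.
by rewrite (vfM hX) (vfM hY); ring.
Qed.

Lemma is_vf_vscale f X : is_vf X -> is_vf (vscale f X).
Proof.
move=> hX; split=> [c a b|a b]; rewrite /vscale.
  by rewrite (vfD hX) (vfZ hX) mulrDr scalerAr.
by rewrite (vfM hX); ring.
Qed.

Lemma is_vf_vbr X Y : is_vf X -> is_vf Y -> is_vf (vbr X Y).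
Proof.
move=> hX hY; split=> [c a b|a b]; rewrite /vbr.
  rewrite (vfD hY) (vfD hX) (vfZ hY) (vfZ hX) (vfD hX) (vfD hY) (vfZ hX) (vfZ hY).
  by rewrite scalerBr opprD addrACA.
by rewrite (vfM hY) (vfM hX) (vfD hX) (vfD hY) !(vfM hX) !(vfM hY); ring.
Qed.

Lemma vscale1 X : vscale 1 X = X.
Proof. by apply: functional_extensionality => a; rewrite /vscale mul1r. Qed.

Lemma vaddv0 X : vadd X (@vzero R A) = X.
Proof. by apply: functional_extensionality => a; rewrite /vadd /vzero addr0. Qed.

Lemma vbr0l Z : is_vf Z -> vbr (@vzero R A) Z = @vzero R A.
Proof.
by move=> hZ; apply: functional_extensionality => a; rewrite /vbr (vf0 hZ) subr0.
Qed.

Lemma vbrC X Y : vbr Y X = vscale (-1) (vbr X Y).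
Proof. by apply: functional_extensionality => a; rewrite /vbr /vscale mulN1r opprB. Qed.

Lemma vbrDr Z U V : is_vf Z -> vbr Z (vadd U V) = vadd (vbr Z U) (vbr Z V).
Proof.
move=> hZ; apply: functional_extensionality => a.
by rewrite /vbr /vadd (vfD hZ) opprD addrACA.
Qed.

Lemma vbrZr Z g U : is_vf Z ->
  vbr Z (vscale g U) = vadd (vscale g (vbr Z U)) (vscale (Z g) U).
Proof.
move=> hZ; apply: functional_extensionality => a.
by rewrite /vbr /vadd /vscale (vfM hZ); ring.
Qed.

Lemma vbr_Jacobi Z X Y : is_vf Z -> is_vf X -> is_vf Y ->
  vbr Z (vbr X Y) = vadd (vbr (vbr Z X) Y) (vbr X (vbr Z Y)).
Proof.
move=> hZ hX hY; apply: functional_extensionality => a.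
by rewrite /vbr /vadd (vfB hZ) (vfB hX) (vfB hY); ring.
Qed.

End VectorFields.

(* Extern hints match syntactically; [Hint Resolve] would try to unify these
   transparent definitions with one another by unfolding them, which is very slow. *)
Create HintDb vf.
#[export] Hint Extern 1 (is_vf (@vzero _ _)) => exact: is_vf_vzero : vf.
#[export] Hint Extern 1 (is_vf (vadd _ _)) => apply: is_vf_vadd : vf.
#[export] Hint Extern 1 (is_vf (vsub _ _)) => apply: is_vf_vsub : vf.
#[export] Hint Extern 1 (is_vf (vscale _ _)) => apply: is_vf_vscale : vf.
#[export] Hint Extern 1 (is_vf (vbr _ _)) => apply: is_vf_vbr : vf.
Ltac vf := match goal with |- is_vf _ => solve [auto 20 with nocore vf] end.
#[export] Hint Extern 0 (is_vf _) => vf : core.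

Section OneForm.
Context {R : comNzRingType} {A : comAlgType R} {eta : (A -> A) -> A}.
Implicit Types (X Y Z U V : A -> A) (f g : A).
Hypothesis eta_lin : forall f X Y, is_vf X -> is_vf Y ->
  eta (vadd (vscale f X) Y) = f * eta X + eta Y.

Lemma etaD U V : is_vf U -> is_vf V -> eta (vadd U V) = eta U + eta V.
Proof. by move=> hU hV; rewrite -[eta U]mul1r -eta_lin // vscale1. Qed.

Lemma eta0 : eta (@vzero R A) = 0.
Proof.
have := etaD (@is_vf_vzero R A) (@is_vf_vzero R A).
by rewrite vaddv0 -{1}[eta _]addr0 => /addrI <-.
Qed.

Lemma etaZ f U : is_vf U -> eta (vscale f U) = f * eta U.
Proof. by move=> hU; rewrite -[RHS]addr0 -eta0 -eta_lin // vaddv0. Qed.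

Lemma etaB U V : is_vf U -> is_vf V -> eta (vsub U V) = eta U - eta V.
Proof.
move=> hU hV; rewrite -mulN1r addrC -eta_lin //; congr eta.
by apply: functional_extensionality => a; rewrite /vadd /vsub /vscale mulN1r addrC.
Qed.

Lemma detaC X Y : is_vf X -> is_vf Y -> deta eta Y X = - deta eta X Y.
Proof. by move=> hX hY; rewrite /deta vbrC etaZ //; ring. Qed.

Lemma deta0l Y : is_vf Y -> deta eta (@vzero R A) Y = 0.
Proof. by move=> hY; rewrite /deta vbr0l // eta0 (vf0 hY) /vzero !subr0. Qed.

Lemma detaDr Z U V : is_vf Z -> is_vf U -> is_vf V ->
  deta eta Z (vadd U V) = deta eta Z U + deta eta Z V.
Proof.
move=> hZ hU hV; rewrite /deta vbrDr // (etaD hU hV).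
rewrite (etaD (is_vf_vbr hZ hU) (is_vf_vbr hZ hV)) (vfD hZ) /vadd; ring.
Qed.

Lemma detaZr Z g U : is_vf Z -> is_vf U ->
  deta eta Z (vscale g U) = g * deta eta Z U.
Proof.
by move=> hZ hU; rewrite /deta vbrZr // etaD // !etaZ // (vfM hZ) /vscale; ring.
Qed.

Lemma Lie_deta_Cartan xi X Y : is_vf xi -> is_vf X -> is_vf Y ->
  Lie_deta xi eta X Y = deta (Lie_eta xi eta) X Y.
Proof.
move=> hxi hX hY.
have jacobi : eta (vbr xi (vbr X Y)) = eta (vbr (vbr xi X) Y) + eta (vbr X (vbr xi Y)).
  by rewrite (vbr_Jacobi hxi hX hY) etaD.
rewrite /Lie_deta /Lie_eta /deta jacobi [vbr xi X _]/vbr [vbr xi Y _]/vbr.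
by rewrite !(vfB hxi) (vfB hX) (vfB hY); ring.
Qed.

End OneForm.

Section AlmostContact.
Context {R : comNzRingType} {A : comAlgType R}.
Variables (phi : (A -> A) -> (A -> A)) (xi : A -> A) (eta : (A -> A) -> A).
Implicit Types (X Y : A -> A).
Hypothesis ac : almost_contact phi xi eta.

#[local] Hint Extern 1 (is_vf xi) => exact: (ac_xi_vf ac) : vf.
#[local] Hint Extern 1 (is_vf (phi _)) => apply: (ac_phi_vf ac) : vf.
Let eta_lin := ac_eta_lin ac.

Lemma phiD X Y : is_vf X -> is_vf Y -> phi (vadd X Y) = vadd (phi X) (phi Y).
Proof. by move=> hX hY; rewrite -{1}(vscale1 X) (ac_phi_lin ac) // vscale1. Qed.

Lemma phi0 : phi (@vzero R A) = @vzero R A.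
Proof.
have := phiD (@is_vf_vzero R A) (@is_vf_vzero R A); rewrite vaddv0 => h.
apply: functional_extensionality => a; move/(congr1 (@^~ a)): h.
by rewrite /vadd -{1}[phi _ a]addr0 => /addrI <-.
Qed.

Lemma phi2_ker_eta X : is_vf X -> eta X = 0 -> phi (phi X) = vscale (-1) X.
Proof.
move=> hX etaX; rewrite (ac_phi2 ac) // etaX.
by apply: functional_extensionality => a; rewrite /vadd /vscale mul0r addr0.
Qed.

Lemma phi3 X : is_vf X -> phi (phi (phi X)) = vscale (-1) (phi X).
Proof. by move=> hX; rewrite (phi2_ker_eta (ac_phi_vf ac hX) (ac_eta_phi ac hX)). Qed.

Lemma deta_xi_Lie_eta X : is_vf X -> deta eta xi X = Lie_eta xi eta X.
Proof. by move=> hX; rewrite /deta /Lie_eta (ac_eta_xi ac) (vf1 hX) subr0. Qed.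

Lemma eta_Nphi X Y : is_vf X -> is_vf Y ->
  eta (Nphi phi xi eta X Y) = eta (vbr (phi X) (phi Y)) + deta eta X Y.
Proof.
(* The bracket is generalized because it unfolds to a [vsub] that [etaB] would capture. *)
move=> hX hY; rewrite /Nphi.
move: (vbr (phi X) (phi Y)) (is_vf_vbr (ac_phi_vf ac hX) (ac_phi_vf ac hY)) => B hB.
rewrite (etaD eta_lin) // !(etaB eta_lin) // (etaD eta_lin) // (etaZ eta_lin) //.
by rewrite !(ac_eta_phi ac) // (ac_eta_xi ac); ring.
Qed.

Section AntiNormal.
Hypothesis hN : forall X Y, is_vf X -> is_vf Y ->
  Nphi phi xi eta X Y = vscale (2%:R * deta eta X Y) xi.

Lemma eta_vbr_phi X Y : is_vf X -> is_vf Y ->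
  eta (vbr (phi X) (phi Y)) = deta eta X Y.
Proof.
move=> hX hY; have := eta_Nphi hX hY.
rewrite hN // (etaZ eta_lin) // (ac_eta_xi ac) mulr1.
by move/esym/(canRL (addrK _)) ->; ring.
Qed.

Lemma deta_phi_phi X Y : is_vf X -> is_vf Y ->
  deta eta (phi X) (phi Y) = - deta eta X Y.
Proof.
move=> hX hY; rewrite {1}/deta eta_vbr_phi // !(ac_eta_phi ac) //.
by rewrite (vf0 (ac_phi_vf ac hX)) (vf0 (ac_phi_vf ac hY)) subrr sub0r.
Qed.

Lemma deta_xi_l X : is_vf X -> deta eta xi X = 0.
Proof.
move=> hX; apply/eqP; rewrite -oppr_eq0 -(deta_phi_phi (ac_xi_vf ac) hX).
by rewrite (ac_phi_xi ac) (deta0l eta_lin).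
Qed.

Lemma Lie_eta_xi X : is_vf X -> Lie_eta xi eta X = 0.
Proof. by move=> hX; rewrite -deta_xi_Lie_eta // deta_xi_l. Qed.

Lemma Lie_deta_xi X Y : is_vf X -> is_vf Y -> Lie_deta xi eta X Y = 0.
Proof.
move=> hX hY; rewrite (Lie_deta_Cartan eta_lin (ac_xi_vf ac) hX hY) /deta.
by rewrite !Lie_eta_xi // (vf0 hX) (vf0 hY) !subr0.
Qed.

Lemma eta_vbr_xi X : is_vf X -> eta (vbr xi X) = xi (eta X).
Proof. by move=> hX; apply/esym/eqP; rewrite -subr_eq0; apply/eqP/Lie_eta_xi. Qed.

Lemma phi_vbr_xi_phi Y : is_vf Y ->
  phi (vbr xi (phi Y)) = phi (phi (vbr xi Y)).
Proof.
move=> hY; have := hN (ac_xi_vf ac) hY.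
rewrite /Nphi deta_xi_l // (ac_phi_xi ac) !vbr0l // phi0.
move=> h; apply: functional_extensionality => a; move/(congr1 (@^~ a)): h.
rewrite /vadd /vsub /vscale /vzero !mulr0 !mul0r !subr0 add0r addr0.
by move/eqP; rewrite subr_eq0 => /eqP ->.
Qed.

Lemma Lie_phi_xi Y : is_vf Y -> Lie_phi phi xi Y = @vzero R A.
Proof.
move=> hY; have etaxiphi : eta (vbr xi (phi Y)) = 0.
  by rewrite eta_vbr_xi // (ac_eta_phi ac) // (vf0 (ac_xi_vf ac)).
have := congr1 phi (phi_vbr_xi_phi hY).
rewrite phi3 // phi2_ker_eta //.
move=> h; apply: functional_extensionality => a; move/(congr1 (@^~ a)): h.
by rewrite /Lie_phi /vsub /vscale /vzero !mulN1r => /oppr_inj ->; rewrite subrr.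
Qed.

Lemma deta_phi_r X Y : is_vf X -> is_vf Y ->
  deta eta (phi X) Y = deta eta X (phi Y).
Proof.
move=> hX hY; have := deta_phi_phi hX (ac_phi_vf ac hY).
rewrite (ac_phi2 ac) // (detaDr eta_lin) // !(detaZr eta_lin) //.
rewrite (detaC eta_lin (ac_xi_vf ac) (ac_phi_vf ac hX)) deta_xi_l //.
by rewrite oppr0 mulr0 addr0 mulN1r => /oppr_inj.
Qed.

End AntiNormal.
End AlmostContact.

Theorem mainTheorem1 (R : comNzRingType) (A : comAlgType R)
    (phi : (A -> A) -> (A -> A)) (xi : A -> A) (eta : (A -> A) -> A) :
  anti_normal phi xi eta ->
  [/\ (forall X, is_vf X -> deta eta xi X = 0)
      /\ (forall X, is_vf X -> Lie_eta xi eta X = 0),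
      (forall X Y, is_vf X -> is_vf Y -> Lie_deta xi eta X Y = 0),
      (forall X, is_vf X -> Lie_phi phi xi X = @vzero R A)
    & (forall X Y, is_vf X -> is_vf Y ->
         deta eta (phi X) (phi Y) = - deta eta X Y)
      /\ (forall X Y, is_vf X -> is_vf Y ->
         deta eta (phi X) Y = deta eta X (phi Y))].
Proof.
case=> ac hN; split.
- by split=> X; [exact: (deta_xi_l ac hN) | exact: (Lie_eta_xi ac hN)].
- exact: (Lie_deta_xi ac hN).
- exact: (Lie_phi_xi ac hN).
- by split=> X Y; [exact: (deta_phi_phi ac hN) | exact: (deta_phi_r ac hN)].
Qed.
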